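(* Let $S,T$ be left inverse semi-braces, $\sigma:T\to\mathrm{Aut}(S)$ a homomorphism from $(T,\cdot)$ into the automorphism group of the left inverse semi-brace $S$ (write ${}^ua=\sigma(u)(a)$), and $\delta:S\to\mathrm{End}(T)$ an anti-homomorphism from $(S,+)$ into the endomorphism semigroup of $(T,+)$ (write $u^a=\delta(a)(u)$) satisfying $(uv)^{\lambda_a({}^ub)}+u((u^{-1})^b+w)=u(v^b+w)$ for all $a,b\in S$, $u,v,w\in T$. Let $B$ be the double semidirect product, i.e. $S\times T$ with $(a,u)+(b,v)=(a+b,u^b+v)$ and $(a,u)(b,v)=(a\,{}^ub,uv)$. Then the map $r_B$ associated to $B$ is given by $$r_B((a,u),(b,v))=\left(\left(\lambda_a({}^ub),\,u\,\Omega^b_{u,v}\right),\ \left({}^{(\Omega^b_{u,v})^{-1}u^{-1}}\rho_{{}^ub}(a),\ (\Omega^b_{u,v})^{-1}v\right)\right)$$ for all $(a,u),(b,v)\in S\times T$, where $\Omega^b_{u,v}=(u^{-1})^b+v$.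
   Context: An inverse semigroup is a semigroup $(S,\cdot)$ in which for each $a$ there is a unique $a^{-1}$ with $aa^{-1}a=a$, $a^{-1}aa^{-1}=a^{-1}$. A left inverse semi-brace is a triple $(S,+,\cdot)$ with $(S,+)$ a semigroup, $(S,\cdot)$ an inverse semigroup and $a(b+c)=ab+a(a^{-1}+c)$ for all $a,b,c$. Set $\lambda_a(b)=a(a^{-1}+b)$, $\rho_b(a)=(a^{-1}+b)^{-1}b$; the map associated to a left inverse semi-brace $X$ is $r_X(x,y)=(\lambda_x(y),\rho_y(x))$. An automorphism of the left inverse semi-brace $S$ is a bijection preserving both operations. That $\delta$ is an anti-homomorphism from $(S,+)$ means $u^{a+b}=(u^a)^b$. Under these hypotheses $B$ is a left inverse semi-brace. *)

Set Implicit Arguments.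

Definition is_inv {X : Type} (mul : X -> X -> X) (a b : X) : Prop :=
  mul (mul a b) a = a /\ mul (mul b a) b = b.

Record lisb := LISB {
  car :> Type;
  sadd : car -> car -> car;
  smul : car -> car -> car;
  sinv : car -> car;
  sadd_assoc : forall a b c, sadd a (sadd b c) = sadd (sadd a b) c;
  smul_assoc : forall a b c, smul a (smul b c) = smul (smul a b) c;
  sinv_is_inv : forall a, is_inv smul a (sinv a);
  sinv_unique : forall a b, is_inv smul a b -> b = sinv a;
  sbrace : forall a b c,
    smul a (sadd b c) = sadd (smul a b) (smul a (sadd (sinv a) c))
}.
Arguments sadd {l} _ _.
Arguments smul {l} _ _.
Arguments sinv {l} _.

Definition lam_of {X : Type} (add mul : X -> X -> X) (inv : X -> X) (a b : X) : X :=
  mul a (add (inv a) b).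
Definition rho_of {X : Type} (add mul : X -> X -> X) (inv : X -> X) (b a : X) : X :=
  mul (inv (add (inv a) b)) b.
Definition r_of {X : Type} (add mul : X -> X -> X) (inv : X -> X) (x y : X) : X * X :=
  (lam_of add mul inv x y, rho_of add mul inv y x).

Definition lam (S : lisb) : S -> S -> S := lam_of (@sadd S) (@smul S) (@sinv S).
Definition rho (S : lisb) : S -> S -> S := rho_of (@sadd S) (@smul S) (@sinv S).

Definition is_aut (S : lisb) (f : S -> S) : Prop :=
  (forall a b : S, f a = f b -> a = b) /\ (forall b : S, exists a : S, f a = b) /\
  (forall a b : S, f (sadd a b) = sadd (f a) (f b)) /\
  (forall a b : S, f (smul a b) = smul (f a) (f b)).

Definition addB (S T : lisb) (delta : S -> T -> T) (x y : S * T) : S * T :=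
  (sadd (fst x) (fst y), sadd (delta (fst y) (snd x)) (snd y)).
Definition mulB (S T : lisb) (sigma : T -> S -> S) (x y : S * T) : S * T :=
  (smul (fst x) (sigma (snd x) (fst y)), smul (snd x) (snd y)).
Arguments lam {S} _ _.
Arguments rho {S} _ _.
Arguments is_aut {S} _.
Arguments addB {S T} _ _ _.
Arguments mulB {S T} _ _ _.


(* Idempotents of T act trivially on S (each sigma e is injective and
   sigma e = sigma e o sigma e), so sigma_{u^-1} inverts sigma_u and the inverse
   of (a,u) in B is forced to be (sigma_{u^-1}(a^-1), u^-1).  Substituting it
   into lambda and rho of B, the first coordinates become lambda and rho of S
   transported along the automorphisms sigma_u, sigma_{u^-1}, sigma_{Om^-1},
   and the second coordinates are the products u Om and Om^-1 v. *)

Section InverseSemigroup.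

Context {S : lisb}.

Lemma mulV_idem (u : S) :
  smul (smul u (sinv u)) (smul u (sinv u)) = smul u (sinv u).
Proof. destruct (sinv_is_inv _ u) as [Hu _]. now rewrite smul_assoc, Hu. Qed.

Lemma Vmul_idem (u : S) :
  smul (smul (sinv u) u) (smul (sinv u) u) = smul (sinv u) u.
Proof. destruct (sinv_is_inv _ u) as [_ Hu]. now rewrite smul_assoc, Hu. Qed.

End InverseSemigroup.

Section Automorphism.

Context {S : lisb} {f : S -> S}.
Hypothesis f_aut : is_aut f.

Lemma aut_sinv (x : S) : f (sinv x) = sinv (f x).
Proof.
  destruct f_aut as [_ [_ [_ f_mul]]].
  apply (sinv_unique _). destruct (sinv_is_inv _ x) as [H1 H2].
  split; rewrite <- !f_mul; congruence.
Qed.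

Lemma aut_rho (a b : S) : f (rho b a) = rho (f b) (f a).
Proof.
  destruct f_aut as [_ [_ [f_add f_mul]]].
  unfold rho, rho_of. now rewrite f_mul, aut_sinv, f_add, aut_sinv.
Qed.

End Automorphism.

Section Action.

Context {S T : lisb} {sigma : T -> S -> S}.
Hypothesis sigma_aut : forall u, is_aut (sigma u).
Hypothesis sigma_hom : forall u v a, sigma (smul u v) a = sigma u (sigma v a).

Lemma sigma_idem (e : T) (a : S) : smul e e = e -> sigma e a = a.
Proof.
  intros He. destruct (sigma_aut e) as [sigma_inj _].
  apply sigma_inj. now rewrite <- sigma_hom, He.
Qed.

Lemma sigma_mulV (u : T) (a : S) : sigma (smul u (sinv u)) a = a.
Proof. apply sigma_idem, mulV_idem. Qed.

Lemma sigma_Vmul (u : T) (a : S) : sigma (smul (sinv u) u) a = a.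
Proof. apply sigma_idem, Vmul_idem. Qed.

Lemma sigmaK (u : T) (a : S) : sigma u (sigma (sinv u) a) = a.
Proof. now rewrite <- sigma_hom, sigma_mulV. Qed.

Lemma sigmaVK (u : T) (a : S) : sigma (sinv u) (sigma u a) = a.
Proof. now rewrite <- sigma_hom, sigma_Vmul. Qed.

Lemma mulB_inv_eq (a c : S) (u w : T) :
  is_inv (mulB sigma) (a, u) (c, w) -> (c, w) = (sigma (sinv u) (sinv a), sinv u).
Proof.
  unfold is_inv, mulB; simpl. intros [H1 H2].
  injection H1 as H1a H1b; injection H2 as H2a H2b.
  assert (Hw : w = sinv u) by (apply (sinv_unique _); split; assumption).
  subst w. rewrite sigma_mulV in H1a. rewrite sigma_Vmul in H2a.
  assert (Hc : sigma u c = sinv a).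
  { apply (sinv_unique _). split; [exact H1a |].
    destruct (sigma_aut u) as [_ [_ [_ sigma_mul]]].
    apply (f_equal (sigma u)) in H2a.
    now rewrite !sigma_mul, sigmaK in H2a. }
  now rewrite <- Hc, sigmaVK.
Qed.

Lemma sigmaV_rho (u : T) (a b : S) :
  sigma (sinv u) (rho (sigma u b) a)
  = smul (sinv (sadd (sigma (sinv u) (sinv a)) b)) b.
Proof.
  rewrite aut_rho, sigmaVK by apply sigma_aut.
  unfold rho, rho_of. now rewrite aut_sinv by apply sigma_aut.
Qed.

End Action.

Theorem proposition42 (S T : lisb) (sigma : T -> S -> S) (delta : S -> T -> T)
  (* sigma : (T,.) -> Aut(S) is a homomorphism *)
  (sigma_aut : forall u, is_aut (sigma u))
  (sigma_hom : forall u v a, sigma (smul u v) a = sigma u (sigma v a))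
  (* delta : (S,+) -> End(T,+) is an anti-homomorphism *)
  (delta_end : forall a u v, delta a (sadd u v) = sadd (delta a u) (delta a v))
  (delta_anti : forall a b u, delta (sadd a b) u = delta b (delta a u))
  (* compatibility condition *)
  (compat : forall (a b : S) (u v w : T),
     sadd (delta (lam a (sigma u b)) (smul u v))
          (smul u (sadd (delta b (sinv u)) w))
     = smul u (sadd (delta b v) w))
  (* invB is the inverse map of the inverse semigroup (B,.) *)
  (invB : S * T -> S * T)
  (invB_inv : forall x, is_inv (mulB sigma) x (invB x)) :
  forall (a b : S) (u v : T),
    let Om := sadd (delta b (sinv u)) v in
    r_of (addB delta) (mulB sigma) invB (a, u) (b, v) =
    ((lam a (sigma u b), smul u Om),
     (sigma (smul (sinv Om) (sinv u)) (rho (sigma u b) a), smul (sinv Om) v)).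
Proof.
  assert (invB_eq : forall a u, invB (a, u) = (sigma (sinv u) (sinv a), sinv u)).
  { intros a u. destruct (invB (a, u)) as [c w] eqn:E.
    apply (mulB_inv_eq sigma_aut sigma_hom). rewrite <- E. apply invB_inv. }
  intros a b u v Om.
  unfold r_of, lam_of, rho_of, addB, mulB.
  rewrite invB_eq; simpl; fold Om; rewrite invB_eq; simpl.
  destruct (sigma_aut u) as [_ [_ [sigma_add _]]].
  destruct (sigma_aut (sinv Om)) as [_ [_ [_ sigma_mul]]].
  f_equal; f_equal.
  - now rewrite sigma_add, (sigmaK sigma_aut sigma_hom).
  - now rewrite sigma_hom, (sigmaV_rho sigma_aut sigma_hom), sigma_mul.
Qed.
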